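(* Consider the delay differential system \[ \begin{aligned} \dot T(t)&= s-dT(t)+aT(t)\Big(1-\frac{T(t)+I(t)}{T_{\max}}\Big)-\frac{bT(t)V(t)}{1+\alpha V(t)},\\ \dot I(t)&= \frac{bT(t-\tau)V(t-\tau)}{1+\alpha V(t-\tau)}+aI(t)\Big(1-\frac{T(t)+I(t)}{T_{\max}}\Big)-\mu I(t),\\ \dot V(t)&= pI(t)-cV(t), \end{aligned} \] with positive constants $s,d,a,T_{\max},b,\alpha,\mu,p,c$ and $\tau\ge0$, and nonnegative continuous initial data on $[-\tau,0]$. Let \[ T_0=\frac{T_{\max}}{2a}\Big(a-d+\sqrt{(a-d)^2+\tfrac{4as}{T_{\max}}}\Big),\qquad R_0=\frac{1}{\mu}\Big[\frac{bpT_0}{c}+a\Big(1-\frac{T_0}{T_{\max}}\Big)\Big]. \] If $R_0\le1$, then the infection-free equilibrium $E_1=(T_0,0,0)$ is globally asymptotically stable.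
   Context: $E_1=(T_0,0,0)$ is a constant solution of the system. *)

From Stdlib Require Import Reals.
From Coquelicot Require Import Coquelicot.
Open Scope R_scope.

Definition T0 (s d a Tmax : R) : R :=
  Tmax / (2 * a) * (a - d + sqrt ((a - d) ^ 2 + 4 * a * s / Tmax)).

Definition R0_number (s d a Tmax b mu p c : R) : R :=
  / mu * (b * p * T0 s d a Tmax / c + a * (1 - T0 s d a Tmax / Tmax)).

(* (T, I, V) : R -> R (only values on [-tau, +oo) matter) is a solution of the
   delay system with nonnegative continuous initial data on [-tau, 0]:
   - T, I, V are continuous on [-tau, +oo);
   - they are nonnegative on [-tau, 0] (initial history);
   - for every t > 0 they are differentiable and satisfy the equations. *)
Definition is_solution (s d a Tmax b alpha mu p c tau : R)
    (T I V : R -> R) : Prop :=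
  continuous_on (fun t => -tau <= t) T /\
  continuous_on (fun t => -tau <= t) I /\
  continuous_on (fun t => -tau <= t) V /\
  (forall t, -tau <= t <= 0 -> 0 <= T t /\ 0 <= I t /\ 0 <= V t) /\
  (forall t, 0 < t ->
     is_derive T t
       (s - d * T t + a * T t * (1 - (T t + I t) / Tmax)
        - b * T t * V t / (1 + alpha * V t)) /\
     is_derive I t
       (b * T (t - tau) * V (t - tau) / (1 + alpha * V (t - tau))
        + a * I t * (1 - (T t + I t) / Tmax) - mu * I t) /\
     is_derive V t (p * I t - c * V t)).

Definition init_close (tau delta x0 y0 z0 : R) (T I V : R -> R) : Prop :=
  forall t, -tau <= t <= 0 ->
    Rabs (T t - x0) < delta /\ Rabs (I t - y0) < delta /\ Rabs (V t - z0) < delta.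

Definition globally_asymptotically_stable (s d a Tmax b alpha mu p c tau : R)
    (x0 y0 z0 : R) : Prop :=
  (forall eps, 0 < eps -> exists delta, 0 < delta /\
     forall T I V, is_solution s d a Tmax b alpha mu p c tau T I V ->
       init_close tau delta x0 y0 z0 T I V ->
       forall t, 0 <= t ->
         Rabs (T t - x0) < eps /\ Rabs (I t - y0) < eps /\ Rabs (V t - z0) < eps) /\
  (forall T I V, is_solution s d a Tmax b alpha mu p c tau T I V ->
     is_lim T p_infty x0 /\ is_lim I p_infty y0 /\ is_lim V p_infty z0).

From Stdlib Require Import Reals Lra Psatz.
From Coquelicot Require Import Coquelicot.
Open Scope R_scope.

(* With g(x) = x - T0 - T0 ln (x / T0) >= 0, the functional
     U(t) = g(T(t)) + I(t) + (b T0 / c) V(t) + int_{t-tau}^t b T V / (1 + alpha V)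
   satisfies, after eliminating d through the equilibrium equation for T0,
     U' = - s (T - T0)^2 / (T T0) - a (T + I - T0)^2 / Tmax - b T0 alpha V^2 / (1 + alpha V)
          + mu (R0 - 1) I,
   the delayed infection terms cancelling. Along nonnegative solutions U is
   therefore nonincreasing and nonnegative. It dominates g(T) + I + (b T0 / c) V, which
   controls the distance to E1, and is small at t = 0 for initial data close to E1: this
   gives stability. It also bounds the solution, hence its derivatives, and a Barbalat
   argument drives each of the three dissipated squares to 0: this gives attractivity.
   Nonnegativity itself comes from a first-exit argument on the solution shifted by a
   small exponential margin. *)

Lemma continuous_eps_delta (f : R -> R) x : continuous f x ->
  forall eps, 0 < eps -> exists del, 0 < del /\
    forall y, Rabs (y - x) < del -> Rabs (f y - f x) < eps.
Proof.
  intros Hf eps Heps.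
  apply filterlim_locally with (eps := mkposreal eps Heps) in Hf.
  destruct Hf as [del Hdel].
  exists del; split; [apply cond_pos|].
  intros y Hy. exact (Hdel y Hy).
Qed.

Lemma continuous_pos_near (f : R -> R) x : continuous f x -> 0 < f x ->
  exists del, 0 < del /\ forall y, Rabs (y - x) < del -> 0 < f y.
Proof.
  intros Hf Hpos.
  destruct (continuous_eps_delta f x Hf (f x / 2)) as [del [Hdel Hy]]; [lra|].
  exists del; split; [exact Hdel|].
  intros y Hxy. specialize (Hy y Hxy). apply Rabs_def2 in Hy. lra.
Qed.

Lemma continuous_locally_bounded (f : R -> R) z : continuous f z ->
  exists del, 0 < del /\ forall t, Rabs (t - z) < del -> Rabs (f t) <= 1 + Rabs (f z).
Proof.
  intros Hf. destruct (continuous_eps_delta f z Hf 1) as [del [Hdel Hy]]; [lra|].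
  exists del; split; [exact Hdel|]. intros t Ht. specialize (Hy t Ht).
  generalize (Rabs_triang_inv (f t) (f z)). lra.
Qed.

Lemma continuous_nonneg_left (f : R -> R) z del0 : continuous f z -> 0 < del0 ->
  (forall u, z - del0 < u < z -> 0 <= f u) -> 0 <= f z.
Proof.
  intros Hf Hdel0 Hleft. destruct (Rle_or_lt 0 (f z)) as [|Hneg]; [assumption|exfalso].
  destruct (continuous_eps_delta f z Hf (- f z / 2)) as [del [Hdel Hy]]; [lra|].
  set (u := z - Rmin del del0 / 2).
  assert (0 < Rmin del del0) by (apply Rmin_glb_lt; lra).
  assert (Hu : Rabs (u - z) < del).
  { unfold u. rewrite Rabs_left by lra. generalize (Rmin_l del del0). lra. }
  specialize (Hy u Hu). apply Rabs_def2 in Hy.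
  assert (0 <= f u) by (apply Hleft; unfold u; generalize (Rmin_r del del0); lra).
  lra.
Qed.

Lemma is_lub_lt (E : R -> Prop) w u : is_lub E w -> u < w ->
  exists x, E x /\ u < x.
Proof.
  intros [_ Hlub] Huw. apply Classical_Prop.NNPP. intros Hn.
  assert (w <= u); [|lra].
  apply Hlub. intros x Ex. destruct (Rle_or_lt x u) as [|Hux]; [assumption|].
  exfalso. apply Hn. exists x. split; assumption.
Qed.

Lemma continuous_first_zero (h : R -> R) z t1 : z < t1 ->
  (forall t, z <= t <= t1 -> continuous h t) -> 0 < h z -> h t1 <= 0 ->
  exists w, z < w <= t1 /\ h w = 0 /\ forall u, z <= u < w -> 0 < h u.
Proof.
  intros Hzt1 Hc Hhz Ht1.
  set (E := fun x => z <= x <= t1 /\ forall u, z <= u <= x -> 0 < h u).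
  assert (Ez : E z).
  { split; [lra|]. intros u Hu. replace u with z by lra. exact Hhz. }
  destruct (completeness E) as [w Hw].
  { exists t1. intros x [Hx _]. lra. }
  { exists z. exact Ez. }
  assert (Hzw : z <= w) by (apply (proj1 Hw); exact Ez).
  assert (Hwt1 : w <= t1) by (apply (proj2 Hw); intros x [Hx _]; lra).
  assert (Hbelow : forall u, z <= u < w -> 0 < h u).
  { intros u Hu. destruct (is_lub_lt E w u Hw (proj2 Hu)) as [x [[_ Hx] Hux]].
    apply Hx. lra. }
  assert (Hcw : continuous h w) by (apply Hc; lra).
  destruct (Rtotal_order (h w) 0) as [Hneg|[Hzero|Hpos]].
  - exfalso.
    destruct (Rle_or_lt w z) as [Hwz|Hwz].
    { replace w with z in Hneg by lra. lra. }
    destruct (continuous_eps_delta h w Hcw (- h w / 2)) as [del [Hdel Hy]]; [lra|].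
    set (u := Rmax z (w - del / 2)).
    assert (Hu1 : z <= u) by apply Rmax_l.
    assert (Hu2 : u < w) by (unfold u; apply Rmax_lub_lt; lra).
    assert (Hu3 : Rabs (u - w) < del).
    { unfold u, Rmax. destruct Rle_dec; rewrite Rabs_left; lra. }
    specialize (Hy u Hu3). specialize (Hbelow u (conj Hu1 Hu2)).
    apply Rabs_def2 in Hy. lra.
  - exists w. split; [|split; assumption].
    split; [|assumption]. destruct (Rle_or_lt w z); [|lra].
    replace w with z in Hzero by lra. lra.
  - exfalso.
    destruct (Rle_or_lt t1 w) as [Htw|Htw].
    { replace w with t1 in Hpos by lra. lra. }
    destruct (continuous_pos_near h w Hcw Hpos) as [del [Hdel Hy]].
    set (x := Rmin t1 (w + del / 2)).
    assert (Ex : E x).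
    { split; [unfold x; split; [apply Rmin_glb; lra|apply Rmin_l]|].
      intros u Hu. destruct (Rlt_or_le u w) as [Huw|Huw]; [apply Hbelow; lra|].
      apply Hy. assert (u <= w + del / 2) by (generalize (Rmin_r t1 (w + del / 2)); unfold x in Hu; lra).
      rewrite Rabs_right; lra. }
    assert (Hxw := proj1 Hw x Ex). unfold x, Rmin in Hxw. destruct Rle_dec in Hxw; lra.
Qed.

Lemma continuous_induction (P : R -> Prop) t0 t1 : t0 <= t1 ->
  (forall t, t0 <= t <= t1 -> P t) ->
  (forall z, t1 < z -> (forall u, t0 <= u < z -> P u) -> P z) ->
  (forall z, t1 <= z -> (forall u, t0 <= u <= z -> P u) ->
     exists eta, 0 < eta /\ forall t, z <= t <= z + eta -> P t) ->
  forall t, t0 <= t -> P t.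
Proof.
  intros H01 Hinit Hclosed Hopen.
  apply Classical_Prop.NNPP. intros Hn.
  apply Classical_Pred_Type.not_all_ex_not in Hn. destruct Hn as [t2 Ht2].
  apply Classical_Prop.imply_to_and in Ht2. destruct Ht2 as [Ht02 HnP].
  set (E := fun x => t1 <= x /\ forall u, t0 <= u <= x -> P u).
  assert (E1 : E t1) by (split; [lra|exact Hinit]).
  destruct (completeness E) as [z Hz].
  { exists t2. intros x [Hx1 Hx2]. destruct (Rle_or_lt x t2); [assumption|].
    exfalso. apply HnP. apply Hx2. lra. }
  { exists t1. exact E1. }
  assert (Ht1z : t1 <= z) by (apply (proj1 Hz); exact E1).
  assert (Hbelow : forall u, t0 <= u < z -> P u).
  { intros u Hu. destruct (Rle_or_lt u t1) as [|Hu1]; [apply Hinit; lra|].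
    destruct (is_lub_lt E z u Hz (proj2 Hu)) as [x [[_ Hx] Hux]]. apply Hx. lra. }
  assert (Hupto : forall u, t0 <= u <= z -> P u).
  { intros u Hu. destruct (Rle_or_lt z u) as [|Huz]; [|apply Hbelow; lra].
    replace u with z by lra.
    destruct (Rle_or_lt z t1); [apply Hinit; lra|]. apply Hclosed; assumption. }
  destruct (Hopen z Ht1z Hupto) as [eta [Heta Hext]].
  assert (E (z + eta)).
  { split; [lra|]. intros u Hu.
    destruct (Rle_or_lt u z); [apply Hupto; lra|apply Hext; lra]. }
  assert (z + eta <= z) by (apply (proj1 Hz); assumption). lra.
Qed.

Lemma ge0_of_ge_small x k r : 0 < r -> (forall eps, 0 < eps < r -> - (eps * k) <= x) -> 0 <= x.
Proof.
  intros Hr Hsmall. destruct (Rle_or_lt 0 x) as [|Hx]; [assumption|exfalso].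
  assert (Hk := Rabs_pos k).
  set (eps := Rmin (r / 2) (- x / (2 * (Rabs k + 1)))).
  assert (Heps : 0 < eps)
    by (apply Rmin_glb_lt; [lra|apply Rdiv_lt_0_compat; lra]).
  assert (Hepsr : eps < r) by (unfold eps; generalize (Rmin_l (r / 2) (- x / (2 * (Rabs k + 1)))); lra).
  assert (Hepsx : eps * (Rabs k + 1) <= - x / 2).
  { apply Rle_trans with (- x / (2 * (Rabs k + 1)) * (Rabs k + 1)).
    - apply Rmult_le_compat_r; [lra|unfold eps; apply Rmin_r].
    - right. field. lra. }
  specialize (Hsmall eps (conj Heps Hepsr)).
  assert (eps * k <= eps * Rabs k) by (apply Rmult_le_compat_l; [lra|apply Rle_abs]).
  nra.
Qed.

Lemma is_derive_pos_left (f : R -> R) w df : is_derive f w df -> 0 < df ->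
  forall del, 0 < del -> exists u, w - del < u < w /\ f u < f w.
Proof.
  intros Hf Hdf del Hdel.
  apply is_derive_Reals in Hf.
  destruct (Hf (df / 2)) as [e He]; [lra|].
  assert (Hm : 0 < Rmin del e) by (apply Rmin_glb_lt; [lra|apply cond_pos]).
  set (h := - Rmin del e / 2).
  assert (Hh : h <> 0) by (unfold h; lra).
  assert (Hhe : Rabs h < e).
  { unfold h. rewrite Rabs_left by lra. generalize (Rmin_r del e). lra. }
  specialize (He h Hh Hhe).
  exists (w + h). split; [unfold h; generalize (Rmin_l del e); lra|].
  apply Rabs_def2 in He. destruct He as [He1 He2].
  assert (Hq : df / 2 < (f (w + h) - f w) / h) by lra.
  assert (Hhneg : h < 0) by (unfold h; lra).
  apply Rmult_lt_compat_r with (r := - h) in Hq; [|lra].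
  replace ((f (w + h) - f w) / h * - h) with (- (f (w + h) - f w)) in Hq by (field; lra).
  nra.
Qed.

Lemma mean_value (f df : R -> R) x y : x < y ->
  (forall t, x < t < y -> is_derive f t (df t)) ->
  (forall t, x <= t <= y -> continuous f t) ->
  exists c, x <= c <= y /\ f y - f x = df c * (y - x).
Proof.
  intros Hxy Hd Hc.
  destruct (MVT_gen f x y df) as [c0 [Hc0 Heq]].
  - intros t Ht. rewrite Rmin_left, Rmax_right in Ht by lra. apply Hd; lra.
  - intros t Ht. rewrite Rmin_left, Rmax_right in Ht by lra.
    apply continuity_pt_filterlim. apply Hc; lra.
  - exists c0. rewrite Rmin_left, Rmax_right in Hc0 by lra. split; assumption.
Qed.

Lemma mean_value_derive (f df : R -> R) x y : x < y ->
  (forall t, x <= t <= y -> is_derive f t (df t)) ->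
  exists c, x <= c <= y /\ f y - f x = df c * (y - x).
Proof.
  intros Hxy Hd. apply mean_value; [assumption| intros t Ht; apply Hd; lra|].
  intros t Ht. apply (ex_derive_continuous f). exists (df t). apply Hd; lra.
Qed.

Lemma is_derive_minus_const (f : R -> R) t df k : is_derive f t df ->
  is_derive (fun x => f x - k) t df.
Proof.
  intros Hf. replace df with (minus df (@zero R_NormedModule))
    by (unfold minus, plus, opp, zero; simpl; ring).
  apply (is_derive_minus f (fun _ => k)); [exact Hf|].
  apply (@is_derive_const R_AbsRing R_NormedModule k t).
Qed.

Lemma Rmin_lipschitz x y x' y' e :
  Rabs (x - x') < e -> Rabs (y - y') < e -> Rabs (Rmin x y - Rmin x' y') < e.
Proof.
  intros H1 H2. apply Rabs_def2 in H1. apply Rabs_def2 in H2.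
  apply Rabs_def1; unfold Rmin; repeat destruct Rle_dec; lra.
Qed.

Lemma continuous_Rmin (f g : R -> R) x : continuous f x -> continuous g x ->
  continuous (fun t => Rmin (f t) (g t)) x.
Proof.
  intros Hf Hg. apply filterlim_locally. intros eps.
  apply filterlim_locally with (eps := eps) in Hf.
  apply filterlim_locally with (eps := eps) in Hg.
  generalize (filter_and _ _ Hf Hg). apply filter_imp.
  intros y [H1 H2]. apply Rmin_lipschitz; assumption.
Qed.

Lemma Rmin3_le x y z :
  Rmin (Rmin x y) z <= x /\ Rmin (Rmin x y) z <= y /\ Rmin (Rmin x y) z <= z.
Proof. unfold Rmin; repeat destruct Rle_dec; lra. Qed.

Lemma Rmin3_eq_0 x y z : Rmin (Rmin x y) z = 0 -> x = 0 \/ y = 0 \/ z = 0.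
Proof. unfold Rmin; repeat destruct Rle_dec; lra. Qed.

Lemma Rmax_lipschitz x y c : Rabs (Rmax x c - Rmax y c) <= Rabs (x - y).
Proof.
  unfold Rmax; destruct (Rle_dec x c), (Rle_dec y c);
  unfold Rabs; repeat destruct Rcase_abs; lra.
Qed.

Lemma continuous_on_clamp (f : R -> R) c : continuous_on (fun t => c <= t) f ->
  forall x, continuous (fun u => f (Rmax u c)) x.
Proof.
  intros Hf x.
  apply filterlim_locally. intros eps.
  specialize (Hf (Rmax x c) (Rmax_r x c)).
  apply filterlim_locally with (eps := eps) in Hf.
  destruct Hf as [del Hdel].
  exists del. intros y Hy.
  apply Hdel; [|apply Rmax_r].
  apply Rle_lt_trans with (Rabs (y - x)); [apply Rmax_lipschitz|exact Hy].
Qed.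

Lemma is_derive_plus_exp (f : R -> R) df w eps L z : is_derive f w df ->
  is_derive (fun t => f t + eps * exp (L * (t - z))) w (df + eps * (L * exp (L * (w - z)))).
Proof.
  intros Hf. apply (is_derive_plus f (fun t => eps * exp (L * (t - z)))); [exact Hf|].
  auto_derive; [trivial|]. unfold Rminus; ring.
Qed.

Lemma continuous_plus_exp (f : R -> R) x eps L z : continuous f x ->
  continuous (fun t => f t + eps * exp (L * (t - z))) x.
Proof.
  intros Hf. apply (continuous_plus f (fun t => eps * exp (L * (t - z)))); [exact Hf|].
  apply (ex_derive_continuous (fun t => eps * exp (L * (t - z)))). auto_derive. trivial.
Qed.

Lemma exp_le_exp x y : x <= y -> exp x <= exp y.
Proof. intros [Hxy|Hxy]; [left; apply exp_increasing; exact Hxy|subst; lra]. Qed.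

Section Barbalat.

Variables (U dU h dh : R -> R) (t0 cc K : R).
Hypotheses (Hcc : 0 < cc) (HK : 0 < K)
  (HU' : forall t, t0 < t -> is_derive U t (dU t))
  (Hh' : forall t, t0 < t -> is_derive h t (dh t))
  (HdU : forall t, t0 < t -> dU t <= - cc * (h t) ^ 2)
  (Hdh : forall t, t0 < t -> Rabs (dh t) <= K)
  (HU : forall t, t0 < t -> 0 <= U t).

Lemma barbalat_nonincreasing x y : t0 < x -> x <= y -> U y <= U x.
Proof.
  intros Hx [Hxy|<-]; [|lra].
  destruct (mean_value_derive U dU x y Hxy) as [c0 [Hc0 Heq]].
  { intros t Ht; apply HU'; lra. }
  assert (dU c0 <= 0) by (generalize (HdU c0 ltac:(lra)) (pow2_ge_0 (h c0)); nra).
  nra.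
Qed.

(* Since |h'| <= K, h stays above eps/2 in absolute value on a window of length
   eps/(2K) after any time where |h| >= eps, and U loses a fixed amount there. *)
Lemma barbalat_drop eps x : 0 < eps -> t0 < x -> eps <= Rabs (h x) ->
  U (x + eps / (2 * K)) <= U x - cc * (eps / 2) ^ 2 * (eps / (2 * K)).
Proof.
  intros Heps Hx Hhx. set (del := eps / (2 * K)).
  assert (Hdel : 0 < del) by (unfold del; apply Rdiv_lt_0_compat; lra).
  assert (Hwindow : forall u, x <= u <= x + del -> (eps / 2) ^ 2 <= (h u) ^ 2).
  { intros u Hu. assert (Hhalf : eps / 2 <= Rabs (h u)).
    { destruct (Rle_lt_or_eq_dec x u ltac:(lra)) as [Hxu|<-]; [|lra].
      destruct (mean_value_derive h dh x u Hxu) as [c0 [Hc0 Heq]].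
      { intros t Ht; apply Hh'; lra. }
      assert (Habs : Rabs (h u - h x) <= eps / 2).
      { rewrite Heq, Rabs_mult, (Rabs_right (u - x)) by lra.
        apply Rle_trans with (K * del).
        - apply Rmult_le_compat; [apply Rabs_pos|lra|apply Hdh; lra|lra].
        - unfold del. right. field. lra. }
      generalize (Rabs_triang_inv (h x) (h u)).
      rewrite <- Rabs_Ropp in Habs. replace (- (h u - h x)) with (h x - h u) in Habs by ring.
      lra. }
    rewrite <- (Rsqr_pow2 (h u)), Rsqr_abs, Rsqr_pow2. apply pow_incr. lra. }
  destruct (mean_value_derive U dU x (x + del)) as [c0 [Hc0 Heq]]; [lra| |].
  { intros t Ht; apply HU'; lra. }
  assert (dU c0 <= - cc * (eps / 2) ^ 2).
  { apply Rle_trans with (- cc * (h c0) ^ 2); [apply HdU; lra|].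
    specialize (Hwindow c0 Hc0). nra. }
  replace (x + del - x) with del in Heq by ring.
  nra.
Qed.

Lemma barbalat : is_lim h p_infty 0.
Proof.
  apply is_lim_spec. intros [eps Heps]. simpl.
  set (gam := cc * (eps / 2) ^ 2 * (eps / (2 * K))).
  assert (Hgam : 0 < gam).
  { unfold gam. apply Rmult_lt_0_compat; [apply Rmult_lt_0_compat; [lra|apply pow_lt; lra]|apply Rdiv_lt_0_compat; lra]. }
  apply Classical_Prop.NNPP. intros Hn.
  assert (Hfar : forall N, exists t, N < t /\ eps <= Rabs (h t)).
  { intros N. apply Classical_Prop.NNPP. intros Hn2. apply Hn. exists N. intros t Ht.
    rewrite Rminus_0_r. destruct (Rlt_or_le (Rabs (h t)) eps) as [|Hge]; [assumption|].
    exfalso. apply Hn2. exists t. split; assumption. }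
  assert (Hiter : forall n : nat, exists x, t0 + 1 <= x /\ U x <= U (t0 + 1) - INR n * gam).
  { induction n as [|n [x [Hx Hux]]].
    - exists (t0 + 1). simpl. lra.
    - destruct (Hfar x) as [t [Ht Hht]].
      exists (t + eps / (2 * K)).
      assert (0 < eps / (2 * K)) by (apply Rdiv_lt_0_compat; lra).
      split; [lra|].
      assert (U (t + eps / (2 * K)) <= U t - gam) by (apply barbalat_drop; lra).
      assert (U t <= U x) by (apply barbalat_nonincreasing; lra).
      rewrite S_INR. lra. }
  destruct (INR_unbounded (U (t0 + 1) / gam)) as [n Hn'].
  destruct (Hiter n) as [x [Hx Hux]].
  assert (0 <= U x) by (apply HU; lra).
  apply (Rmult_lt_compat_r gam) in Hn'; [|lra].
  unfold Rdiv in Hn'. rewrite Rmult_assoc, Rinv_l, Rmult_1_r in Hn' by lra.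
  lra.
Qed.

End Barbalat.

(** * The Volterra function *)

Definition volterra (x0 x : R) := x - x0 - x0 * ln (x / x0).

Lemma ln_le_sub1 y : 0 < y -> ln y <= y - 1.
Proof. intros Hy. generalize (exp_ineq1_le (ln y)). rewrite exp_ln by exact Hy. lra. Qed.

Lemma ln_ge_1_sub_inv y : 0 < y -> 1 - / y <= ln y.
Proof.
  intros Hy. assert (H := ln_le_sub1 (/ y) ltac:(apply Rinv_0_lt_compat; lra)).
  rewrite ln_Rinv in H by lra. lra.
Qed.

Lemma ln_le_half y : 0 < y -> ln y <= y / 2.
Proof.
  intros Hy. assert (Hln2 : ln 2 < 1).
  { rewrite <- (ln_exp 1). apply ln_increasing; [lra|].
    generalize (exp_ineq1 1 ltac:(lra)). lra. }
  assert (H := ln_le_sub1 (y / 2) ltac:(lra)).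
  rewrite ln_div in H by lra. lra.
Qed.

Section Volterra.

Variable x0 : R.
Hypothesis Hx0 : 0 < x0.

Lemma volterra_ge0 x : 0 < x -> 0 <= volterra x0 x.
Proof.
  intros Hx. unfold volterra.
  assert (H := ln_le_sub1 (x / x0) ltac:(apply Rdiv_lt_0_compat; lra)).
  assert (x0 * ln (x / x0) <= x0 * (x / x0 - 1)) by (apply Rmult_le_compat_l; lra).
  replace (x0 * (x / x0 - 1)) with (x - x0) in * by (field; lra). lra.
Qed.

Lemma volterra_ge_half x : 0 < x -> x / 2 - x0 <= volterra x0 x.
Proof.
  intros Hx. unfold volterra.
  assert (H := ln_le_half (x / x0) ltac:(apply Rdiv_lt_0_compat; lra)).
  assert (x0 * ln (x / x0) <= x0 * (x / x0 / 2)) by (apply Rmult_le_compat_l; lra).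
  replace (x0 * (x / x0 / 2)) with (x / 2) in * by (field; lra). lra.
Qed.

Lemma volterra_le_sqr x : 0 < x -> volterra x0 x <= (x - x0) ^ 2 / x.
Proof.
  intros Hx. unfold volterra.
  assert (H := ln_ge_1_sub_inv (x / x0) ltac:(apply Rdiv_lt_0_compat; lra)).
  assert (x0 * (1 - / (x / x0)) <= x0 * ln (x / x0)) by (apply Rmult_le_compat_l; lra).
  replace (x0 * (1 - / (x / x0))) with (x0 - x0 * x0 / x) in * by (field; lra).
  replace ((x - x0) ^ 2 / x) with (x - 2 * x0 + x0 * x0 / x) by (field; lra). lra.
Qed.

Lemma volterra_incr x y : x0 <= y -> y <= x -> volterra x0 y <= volterra x0 x.
Proof.
  intros Hy Hxy. unfold volterra.
  assert (Hl : x0 * ln (x / x0) - x0 * ln (y / x0) = x0 * ln (x / y))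
    by (rewrite !ln_div by lra; ring).
  assert (H := ln_le_sub1 (x / y) ltac:(apply Rdiv_lt_0_compat; lra)).
  assert (x0 * ln (x / y) <= x0 * (x / y - 1)) by (apply Rmult_le_compat_l; lra).
  assert (x0 * (x / y - 1) <= x - y).
  { replace (x0 * (x / y - 1)) with ((x - y) * (x0 / y)) by (field; lra).
    assert (x0 / y <= 1)
      by (apply (Rmult_le_reg_r y); [lra|]; unfold Rdiv; rewrite Rmult_assoc, Rinv_l; lra).
    assert (0 <= x0 / y) by (apply Rdiv_le_0_compat; lra). nra. }
  lra.
Qed.

Lemma volterra_decr x y : 0 < x -> x <= y -> y <= x0 -> volterra x0 y <= volterra x0 x.
Proof.
  intros Hx Hxy Hy. unfold volterra.
  assert (Hl : x0 * ln (y / x0) - x0 * ln (x / x0) = x0 * ln (y / x))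
    by (rewrite !ln_div by lra; ring).
  assert (H := ln_ge_1_sub_inv (y / x) ltac:(apply Rdiv_lt_0_compat; lra)).
  assert (x0 * (1 - / (y / x)) <= x0 * ln (y / x)) by (apply Rmult_le_compat_l; lra).
  assert (y - x <= x0 * (1 - / (y / x))).
  { replace (x0 * (1 - / (y / x))) with ((y - x) * (x0 / y)) by (field; lra).
    assert (1 <= x0 / y)
      by (apply (Rmult_le_reg_r y); [lra|]; unfold Rdiv; rewrite Rmult_assoc, Rinv_l; lra).
    nra. }
  lra.
Qed.

Lemma volterra_pos_off x : 0 < x -> x <> x0 -> 0 < volterra x0 x.
Proof.
  intros Hx Hne. unfold volterra.
  assert (Hq : 0 < x / x0) by (apply Rdiv_lt_0_compat; lra).
  assert (Hq1 : x / x0 - 1 <> 0).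
  { intros Hq1. apply Hne. apply (Rmult_eq_reg_r (/ x0)); [|apply Rinv_neq_0_compat; lra].
    rewrite Rinv_r by lra. unfold Rdiv in Hq1. lra. }
  assert (Hl : ln (x / x0) < x / x0 - 1).
  { rewrite <- (ln_exp (x / x0 - 1)).
    apply ln_increasing; [exact Hq|]. generalize (exp_ineq1 (x / x0 - 1) Hq1). lra. }
  assert (x0 * ln (x / x0) < x0 * (x / x0 - 1)) by (apply Rmult_lt_compat_l; lra).
  replace (x0 * (x / x0 - 1)) with (x - x0) in * by (field; lra). lra.
Qed.

Lemma volterra_lt_close e x : 0 < e < x0 -> 0 < x ->
  volterra x0 x < Rmin (volterra x0 (x0 + e)) (volterra x0 (x0 - e)) -> Rabs (x - x0) < e.
Proof.
  intros He Hx Hg. apply Rabs_def1.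
  - destruct (Rlt_or_le (x - x0) e) as [|Hge]; [assumption|exfalso].
    assert (volterra x0 (x0 + e) <= volterra x0 x) by (apply volterra_incr; lra).
    generalize (Rmin_l (volterra x0 (x0 + e)) (volterra x0 (x0 - e))). lra.
  - destruct (Rlt_or_le (- e) (x - x0)) as [|Hle]; [assumption|exfalso].
    assert (volterra x0 (x0 - e) <= volterra x0 x) by (apply volterra_decr; lra).
    generalize (Rmin_r (volterra x0 (x0 + e)) (volterra x0 (x0 - e))). lra.
Qed.

Lemma volterra_sublevel_small k eps : 0 < k -> 0 < eps -> exists m, 0 < m /\
  forall x y z, 0 < x -> 0 <= y -> 0 <= z -> volterra x0 x + y + k * z < m ->
    Rabs (x - x0) < eps /\ y < eps /\ z < eps.
Proof.
  intros Hk Heps.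
  set (e := Rmin eps (x0 / 2)).
  assert (He : 0 < e < x0) by (unfold e; split; [apply Rmin_glb_lt|generalize (Rmin_r eps (x0 / 2))]; lra).
  assert (Hg1 : 0 < volterra x0 (x0 + e)) by (apply volterra_pos_off; lra).
  assert (Hg2 : 0 < volterra x0 (x0 - e)) by (apply volterra_pos_off; lra).
  exists (Rmin (Rmin (volterra x0 (x0 + e)) (volterra x0 (x0 - e))) (Rmin eps (k * eps))).
  split; [apply Rmin_glb_lt; apply Rmin_glb_lt; nra|].
  intros x y z Hx Hy Hz Hsmall.
  destruct (Rmin3_le (volterra x0 (x0 + e)) (volterra x0 (x0 - e)) (Rmin eps (k * eps)))
    as [_ [_ Hm]].
  generalize (Rmin_l eps (k * eps)) (Rmin_r eps (k * eps)).
  assert (Hg := volterra_ge0 x Hx).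
  assert (0 <= k * z) by nra.
  intros Hm1 Hm2. split; [|split].
  - apply Rlt_le_trans with e; [|apply Rmin_l].
    apply volterra_lt_close; [exact He|exact Hx|].
    apply Rle_lt_trans with (volterra x0 x + y + k * z); [lra|].
    apply Rlt_le_trans with (1 := Hsmall). apply Rmin_l.
  - lra.
  - apply (Rmult_lt_reg_l k); [exact Hk|]. lra.
Qed.

End Volterra.

(** * Estimates on the vector field *)

Lemma infection_ge b alpha x z q M : 0 < b -> 0 < alpha -> 0 <= q -> alpha * q <= 1 / 2 ->
  q <= M -> -q <= x <= M -> -q <= z <= M -> - (2 * b * M * q) <= b * x * z / (1 + alpha * z).
Proof.
  intros Hb Ha Hq Haq HqM [Hx1 Hx2] [Hz1 Hz2].
  assert (Hden : 1 / 2 <= 1 + alpha * z) by nra.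
  assert (Hxz : - (M * q) <= x * z) by (destruct (Rle_or_lt 0 x), (Rle_or_lt 0 z); nra).
  assert (0 <= b * M * q) by (apply Rmult_le_pos; [apply Rmult_le_pos|]; lra).
  assert (b * (x * z) >= - (b * (M * q))) by nra.
  destruct (Rle_or_lt 0 (x * z)) as [Hp|Hn].
  - assert (0 <= b * x * z / (1 + alpha * z)).
    { apply Rdiv_le_0_compat; [rewrite Rmult_assoc; apply Rmult_le_pos|]; lra. }
    nra.
  - assert (E : b * x * z / (1 + alpha * z) - 2 * b * x * z
              = b * (x * z) * (-1 - 2 * alpha * z) / (1 + alpha * z)) by (field; lra).
    assert (0 <= b * (x * z) * (-1 - 2 * alpha * z) / (1 + alpha * z)).
    { apply Rdiv_le_0_compat; [|lra]. assert (b * (x * z) <= 0) by nra. nra. }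
    nra.
Qed.

Lemma infection_le_mass b alpha x z : 0 < b -> 0 < alpha -> 0 <= x -> 0 <= z ->
  b * x * z / (1 + alpha * z) <= b * x * z.
Proof.
  intros Hb Ha Hx Hz. assert (Hden : 1 <= 1 + alpha * z) by nra.
  assert (0 <= b * x * z) by (apply Rmult_le_pos; [apply Rmult_le_pos|]; lra).
  unfold Rdiv. rewrite <- (Rmult_1_r (b * x * z)) at 2. apply Rmult_le_compat_l; [assumption|].
  rewrite <- Rinv_1. apply Rinv_le_contravar; lra.
Qed.

Lemma infection_bounds b alpha x z M : 0 < b -> 0 < alpha -> 0 <= x <= M -> 0 <= z <= M ->
  0 <= b * x * z / (1 + alpha * z) <= b * M * M.
Proof.
  intros Hb Ha Hx Hz.
  split; [apply Rdiv_le_0_compat; [apply Rmult_le_pos; [apply Rmult_le_pos|]|]; nra|].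
  apply Rle_trans with (b * x * z); [apply infection_le_mass; lra|].
  assert (x * z <= M * M) by (apply Rmult_le_compat; lra). nra.
Qed.

Lemma logistic_neg_ge a Tmax q M y : 0 < a -> 0 < Tmax -> 0 <= q -> q <= 1 -> 1 <= M ->
  -q <= y -> - (a * q) - 2 * a * M / Tmax * q <= a * (- q) * (1 - (- q + y) / Tmax).
Proof.
  intros Ha HT Hq Hq1 HM Hy.
  replace (a * (- q) * (1 - (- q + y) / Tmax)) with (- (a * q) + (a * q / Tmax) * (y - q))
    by (field; lra).
  assert (0 <= a * q / Tmax) by (apply Rle_mult_inv_pos; nra).
  assert ((a * q / Tmax) * (-2 * M) <= (a * q / Tmax) * (y - q)) by (apply Rmult_le_compat_l; lra).
  replace (2 * a * M / Tmax * q) with ((a * q / Tmax) * (2 * M)) by (field; lra).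
  lra.
Qed.

Lemma logistic_bounds a Tmax x y M : 0 < a -> 0 < Tmax -> 0 <= x <= M -> 0 <= y <= M ->
  - (2 * a * M * M / Tmax) <= a * x * (1 - (x + y) / Tmax) - a * x <= 0.
Proof.
  intros Ha HT Hx Hy.
  replace (a * x * (1 - (x + y) / Tmax) - a * x) with (- (a * (x * (x + y)) / Tmax))
    by (field; lra).
  assert (0 <= x * (x + y) <= M * (2 * M))
    by (split; [apply Rmult_le_pos|apply Rmult_le_compat]; lra).
  assert (0 <= a * (x * (x + y)) / Tmax) by (apply Rdiv_le_0_compat; nra).
  assert (a * (x * (x + y)) / Tmax <= 2 * a * M * M / Tmax).
  { unfold Rdiv. apply Rmult_le_compat_r; [left; apply Rinv_0_lt_compat; lra|nra]. }
  lra.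
Qed.

Section Model.

Variables s d a Tmax b alpha mu p c tau : R.
Hypotheses (Hs : 0 < s) (Hd : 0 < d) (Ha : 0 < a) (HTmax : 0 < Tmax) (Hb : 0 < b)
  (Halpha : 0 < alpha) (Hmu : 0 < mu) (Hp : 0 < p) (Hc : 0 < c) (Htau : 0 <= tau).

Local Notation Tz := (T0 s d a Tmax).
Local Notation kV := (b * T0 s d a Tmax / c).

Definition infection x z := b * x * z / (1 + alpha * z).
Definition rhs_T x y z := s - d * x + a * x * (1 - (x + y) / Tmax) - infection x z.
Definition rhs_I xd zd x y := infection xd zd + a * y * (1 - (x + y) / Tmax) - mu * y.
Definition rhs_V y z := p * y - c * z.

Lemma T0_pos : 0 < Tz.
Proof.
  unfold T0. set (D := (a - d) ^ 2 + 4 * a * s / Tmax).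
  assert (HD : (a - d) ^ 2 < D).
  { unfold D. assert (0 < 4 * a * s / Tmax) by (apply Rdiv_lt_0_compat; nra). lra. }
  clearbody D.
  assert (HS : sqrt D * sqrt D = D) by (apply sqrt_sqrt; generalize (pow2_ge_0 (a - d)); lra).
  assert (sqrt D >= 0) by (apply Rle_ge, sqrt_pos).
  assert (d - a < sqrt D) by (destruct (Rle_or_lt (d - a) 0); nra).
  apply Rmult_lt_0_compat; [apply Rdiv_lt_0_compat|]; lra.
Qed.

Lemma T0_equilibrium : s - d * Tz + a * Tz * (1 - Tz / Tmax) = 0.
Proof.
  unfold T0. set (D := (a - d) ^ 2 + 4 * a * s / Tmax).
  assert (HD : D * Tmax = (a - d) ^ 2 * Tmax + 4 * a * s) by (unfold D; field; lra).
  assert (HS : sqrt D * sqrt D = D).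
  { apply sqrt_sqrt. unfold D. assert (0 < 4 * a * s / Tmax) by (apply Rdiv_lt_0_compat; nra).
    generalize (pow2_ge_0 (a - d)). lra. }
  clearbody D. field_simplify_eq; [nra|lra].
Qed.

Lemma R0_le_1_mu : R0_number s d a Tmax b mu p c <= 1 ->
  b * p * Tz / c + a * (1 - Tz / Tmax) <= mu.
Proof.
  unfold R0_number. intros HR0.
  apply (Rmult_le_compat_l mu) in HR0; [|lra].
  rewrite <- Rmult_assoc, Rinv_r, Rmult_1_l, Rmult_1_r in HR0 by lra. exact HR0.
Qed.

Definition dissipation x y z :=
  s / (x * Tz) * (x - Tz) ^ 2 + a / Tmax * (x + y - Tz) ^ 2
  + b * Tz * alpha * z ^ 2 / (1 + alpha * z).

Lemma dissipation_terms_ge0 x y z : 0 < x -> 0 <= z ->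
  0 <= s / (x * Tz) * (x - Tz) ^ 2 /\ 0 <= a / Tmax * (x + y - Tz) ^ 2 /\
  0 <= b * Tz * alpha * z ^ 2 / (1 + alpha * z).
Proof.
  intros Hx Hz. assert (HT0 := T0_pos).
  split; [|split].
  - apply Rmult_le_pos; [apply Rdiv_le_0_compat; nra|apply pow2_ge_0].
  - apply Rmult_le_pos; [apply Rdiv_le_0_compat; lra|apply pow2_ge_0].
  - apply Rdiv_le_0_compat; [|nra].
    apply Rmult_le_pos; [|apply pow2_ge_0]. apply Rmult_le_pos; [apply Rmult_le_pos|]; lra.
Qed.

Lemma lyapunov_rhs_le x y z xd zd : R0_number s d a Tmax b mu p c <= 1 ->
  0 < x -> 0 <= y -> 0 <= z -> 0 <= zd ->
  rhs_T x y z - Tz * (rhs_T x y z / x) + rhs_I xd zd x y + kV * rhs_V y z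
    + (infection x z - infection xd zd) <= - dissipation x y z.
Proof.
  intros HR0 Hx Hy Hz Hzd.
  assert (HT0 := T0_pos). assert (HR := R0_le_1_mu HR0). assert (Heq := T0_equilibrium).
  unfold dissipation. set (x0 := T0 s d a Tmax) in *. clearbody x0.
  assert (Hdef : d = (s + a * x0 * (1 - x0 / Tmax)) / x0).
  { apply (Rmult_eq_reg_r x0); [|lra].
    unfold Rdiv. rewrite Rmult_assoc, Rinv_l by lra. lra. }
  assert (0 < 1 + alpha * z) by nra. assert (0 < 1 + alpha * zd) by nra.
  assert (E : rhs_T x y z - x0 * (rhs_T x y z / x) + rhs_I xd zd x y + b * x0 / c * rhs_V y z
      + (infection x z - infection xd zd)
    = - (s / (x * x0) * (x - x0) ^ 2 + a / Tmax * (x + y - x0) ^ 2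
         + b * x0 * alpha * z ^ 2 / (1 + alpha * z))
      + y * (b * p * x0 / c + a * (1 - x0 / Tmax) - mu)).
  { unfold rhs_T, rhs_I, rhs_V, infection. rewrite Hdef.
    field. repeat split; lra. }
  rewrite E. nra.
Qed.

Definition escape_rate M := 1 + p + a + 2 * a * M / Tmax + 2 * b * M.

Section Escape.

Variables q M : R.
Hypotheses (Hq : 0 < q) (Hq1 : q <= 1) (Hqalpha : alpha * q <= 1 / 2) (HM : 1 <= M).

Lemma escape_rate_q : escape_rate M * q = q + p * q + a * q + 2 * a * M / Tmax * q + 2 * b * M * q.
Proof. unfold escape_rate. ring. Qed.

Lemma rhs_T_escape y z : -q <= y <= M -> -q <= z <= M -> 0 < rhs_T (- q) y z + escape_rate M * q.
Proof.
  intros Hy Hz. rewrite escape_rate_q. unfold rhs_T, infection.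
  assert (Hlog := logistic_neg_ge a Tmax q M y Ha HTmax ltac:(lra) Hq1 HM ltac:(lra)).
  assert (Hinf := infection_ge b alpha q z q M Hb Halpha ltac:(lra) Hqalpha ltac:(lra) ltac:(lra) Hz).
  replace (b * - q * z / (1 + alpha * z)) with (- (b * q * z / (1 + alpha * z))) by (unfold Rdiv; ring).
  assert (0 <= d * q) by nra. assert (0 <= p * q) by nra. lra.
Qed.

Lemma rhs_I_escape xd zd x : - (2 * b * M * q) <= infection xd zd -> -q <= x ->
  0 < rhs_I xd zd x (- q) + escape_rate M * q.
Proof.
  intros Hinf Hx. rewrite escape_rate_q. unfold rhs_I.
  assert (Hlog := logistic_neg_ge a Tmax q M x Ha HTmax ltac:(lra) Hq1 HM Hx).
  rewrite (Rplus_comm x (- q)).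
  assert (0 <= mu * q) by nra. assert (0 <= p * q) by nra. lra.
Qed.

Lemma rhs_V_escape y : -q <= y -> 0 < rhs_V y (- q) + escape_rate M * q.
Proof.
  intros Hy. rewrite escape_rate_q. unfold rhs_V.
  assert (p * (- q) <= p * y) by (apply Rmult_le_compat_l; lra).
  assert (0 <= 2 * a * M / Tmax * q) by (apply Rmult_le_pos; [apply Rdiv_le_0_compat|]; nra).
  assert (0 <= 2 * b * M * q) by (apply Rmult_le_pos; nra).
  nra.
Qed.

End Escape.

Definition bound_T M := s + d * M + a * M + 2 * a * M * M / Tmax + b * M * M.
Definition bound_I M := b * M * M + a * M + 2 * a * M * M / Tmax + mu * M.
Definition bound_V M := p * M + c * M.

Lemma bounds_pos M : 0 < M -> 0 < bound_T M /\ 0 < bound_I M /\ 0 < bound_V M.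
Proof.
  intros HM. unfold bound_T, bound_I, bound_V.
  assert (0 <= 2 * a * M * M / Tmax) by (apply Rdiv_le_0_compat; nra).
  assert (0 < b * M * M) by (apply Rmult_lt_0_compat; nra).
  repeat split; nra.
Qed.

Lemma rhs_bounds M x y z xd zd : 0 <= x <= M -> 0 <= y <= M -> 0 <= z <= M ->
  0 <= xd <= M -> 0 <= zd <= M ->
  Rabs (rhs_T x y z) <= bound_T M /\ Rabs (rhs_I xd zd x y) <= bound_I M /\
  Rabs (rhs_V y z) <= bound_V M.
Proof.
  intros Hx Hy Hz Hxd Hzd.
  destruct (logistic_bounds a Tmax x y M Ha HTmax Hx Hy) as [L1 L2].
  destruct (logistic_bounds a Tmax y x M Ha HTmax Hy Hx) as [L3 L4].
  rewrite (Rplus_comm y x) in L3, L4.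
  destruct (infection_bounds b alpha x z M Hb Halpha Hx Hz) as [F1 F2].
  destruct (infection_bounds b alpha xd zd M Hb Halpha Hxd Hzd) as [F3 F4].
  assert (0 <= 2 * a * M * M / Tmax) by (apply Rdiv_le_0_compat; nra).
  unfold rhs_T, rhs_I, rhs_V, infection, bound_T, bound_I, bound_V.
  repeat split; apply Rabs_le; nra.
Qed.

Lemma infection_ge0 x z : 0 <= x -> 0 <= z -> 0 <= infection x z.
Proof.
  intros Hx Hz. unfold infection.
  apply Rdiv_le_0_compat; [apply Rmult_le_pos; [apply Rmult_le_pos|]|]; nra.
Qed.

Lemma escape_rate_pos M : 1 <= M -> 0 < escape_rate M.
Proof.
  intros HM. unfold escape_rate.
  assert (0 <= 2 * a * M / Tmax) by (apply Rdiv_le_0_compat; nra). nra.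
Qed.

(* Solutions are only defined from -tau on; clamping extends them continuously to R. *)
Definition clamp (f : R -> R) u := f (Rmax u (- tau)).

Lemma clamp_eq f t : -tau <= t -> clamp f t = f t.
Proof. intros Ht. unfold clamp. rewrite Rmax_left; [reflexivity|exact Ht]. Qed.

Section Solution.

Variables T I V : R -> R.
Hypothesis Hsol : is_solution s d a Tmax b alpha mu p c tau T I V.

Lemma solution_continuous x :
  continuous (clamp T) x /\ continuous (clamp I) x /\ continuous (clamp V) x.
Proof.
  destruct Hsol as [HT [HI [HV _]]].
  split; [|split]; apply continuous_on_clamp; assumption.
Qed.

Lemma solution_derive t : 0 < t ->
  is_derive T t (rhs_T (T t) (I t) (V t)) /\
  is_derive I t (rhs_I (T (t - tau)) (V (t - tau)) (T t) (I t)) /\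
  is_derive V t (rhs_V (I t) (V t)).
Proof. intros Ht. destruct Hsol as [_ [_ [_ [_ Hd']]]]. exact (Hd' t Ht). Qed.

Definition nonneg_at t := 0 <= T t /\ 0 <= I t /\ 0 <= V t.

(** * Nonnegativity of solutions *)

(* Past a time z up to which the solution is nonnegative, add the margin
   eps e^(L (t - z)) to each component. Whichever shifted component reaches 0 first
   would have positive derivative there (the escape lemmas, L = escape_rate M), which
   is impossible; letting eps go to 0 keeps the solution nonnegative a little beyond z. *)
Section Continuation.

Variables z eta M eps : R.
Hypotheses (Hz : 0 <= z) (HM : 1 <= M)
  (Hpast : forall u, -tau <= u <= z -> nonneg_at u)
  (Hbound : forall t, z <= t <= z + eta ->
     Rabs (T t) <= M /\ Rabs (I t) <= M /\ Rabs (V t) <= M)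
  (Heps : 0 < eps) (Heps1 : eps * exp (escape_rate M * eta) <= 1)
  (Heps_alpha : alpha * (eps * exp (escape_rate M * eta)) <= 1 / 2).

Definition margin t := eps * exp (escape_rate M * (t - z)).

Definition perturbed_min t :=
  Rmin (Rmin (clamp T t + margin t) (clamp I t + margin t)) (clamp V t + margin t).

Lemma margin_pos t : 0 < margin t.
Proof. apply Rmult_lt_0_compat; [exact Heps|apply exp_pos]. Qed.

Lemma margin_incr t1 t2 : t1 <= t2 -> margin t1 <= margin t2.
Proof.
  intros Ht. apply Rmult_le_compat_l; [lra|]. apply exp_le_exp.
  assert (HL := escape_rate_pos M HM). nra.
Qed.

Lemma margin_small t : t <= z + eta -> margin t <= 1 /\ alpha * margin t <= 1 / 2.
Proof.
  intros Ht. assert (Hm : margin t <= margin (z + eta)) by (apply margin_incr; exact Ht).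
  unfold margin at 2 in Hm. replace (z + eta - z) with eta in Hm by ring.
  split; [lra|]. apply Rle_trans with (alpha * (eps * exp (escape_rate M * eta))); [|exact Heps_alpha].
  apply Rmult_le_compat_l; lra.
Qed.

Lemma perturbed_min_continuous t : continuous perturbed_min t.
Proof.
  destruct (solution_continuous t) as [HT [HI HV]].
  unfold perturbed_min, margin.
  apply continuous_Rmin; [apply continuous_Rmin|]; apply continuous_plus_exp; assumption.
Qed.

Lemma ge_margin_of_perturbed_min u : -tau <= u -> 0 <= perturbed_min u ->
  - margin u <= T u /\ - margin u <= I u /\ - margin u <= V u.
Proof.
  intros Hu Hpm. unfold perturbed_min in Hpm. rewrite !clamp_eq in Hpm by exact Hu.
  destruct (Rmin3_le (T u + margin u) (I u + margin u) (V u + margin u)) as [H1 [H2 H3]].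
  lra.
Qed.

Lemma first_touch_impossible (f : R -> R) df w : z < w -> is_derive f w df ->
  0 < df + escape_rate M * margin w -> f w + margin w = 0 ->
  (forall u, z <= u < w -> 0 < f u + margin u) -> False.
Proof.
  intros Hzw Hf Hdf Hfw Hbefore.
  assert (Hd2 := is_derive_plus_exp f df w eps (escape_rate M) z Hf).
  destruct (is_derive_pos_left _ w _ Hd2) with (del := w - z) as [u [Hu Hfu]].
  { unfold margin in Hdf. lra. }
  { lra. }
  specialize (Hbefore u ltac:(lra)). unfold margin in Hbefore, Hfw. lra.
Qed.

Lemma delayed_infection_ge w : z < w <= z + eta ->
  (forall u, z <= u <= w -> - margin u <= T u /\ - margin u <= I u /\ - margin u <= V u) ->
  - (2 * b * M * margin w) <= infection (T (w - tau)) (V (w - tau)).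
Proof.
  intros Hw Hlow. assert (Hmw := margin_pos w). destruct (margin_small w ltac:(lra)) as [Hm1 Hma].
  destruct (Rle_or_lt (w - tau) z) as [Hpast'|Hrecent].
  - destruct (Hpast (w - tau) ltac:(lra)) as [HT [_ HV]].
    assert (Hinf := infection_ge0 _ _ HT HV).
    assert (0 <= 2 * b * M) by nra.
    assert (0 <= 2 * b * M * margin w) by (apply Rmult_le_pos; lra). lra.
  - destruct (Hlow (w - tau) ltac:(lra)) as [HT [_ HV]].
    assert (Hmono : margin (w - tau) <= margin w) by (apply margin_incr; lra).
    destruct (Hbound (w - tau) ltac:(lra)) as [BT [_ BV]].
    apply Rabs_le_between in BT. apply Rabs_le_between in BV.
    apply infection_ge; try assumption; lra.
Qed.

Lemma perturbed_min_pos t : z <= t <= z + eta -> 0 < perturbed_min t.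
Proof.
  intros Ht. destruct (Rle_or_lt (perturbed_min t) 0) as [Hneg|]; [exfalso|assumption].
  assert (Hstart : 0 < perturbed_min z).
  { unfold perturbed_min. rewrite !clamp_eq by lra.
    destruct (Hpast z ltac:(lra)) as [H1 [H2 H3]]. assert (Hm := margin_pos z).
    apply Rmin_glb_lt; [apply Rmin_glb_lt|]; lra. }
  assert (Hzt : z < t) by (destruct (Rle_or_lt t z); [replace t with z in Hneg by lra; lra|lra]).
  destruct (continuous_first_zero perturbed_min z t Hzt) as [w [Hw [Hw0 Hbefore]]];
    [intros; apply perturbed_min_continuous|exact Hstart|exact Hneg|].
  assert (Hlow : forall u, z <= u <= w ->
    - margin u <= T u /\ - margin u <= I u /\ - margin u <= V u).
  { intros u Hu. apply ge_margin_of_perturbed_min; [lra|].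
    destruct (Rle_or_lt w u); [replace u with w by lra; lra|left; apply Hbefore; lra]. }
  assert (Hbefore' : forall u, z <= u < w ->
    0 < T u + margin u /\ 0 < I u + margin u /\ 0 < V u + margin u).
  { intros u Hu. specialize (Hbefore u Hu). unfold perturbed_min in Hbefore.
    rewrite !clamp_eq in Hbefore by lra.
    destruct (Rmin3_le (T u + margin u) (I u + margin u) (V u + margin u)) as [H1 [H2 H3]].
    lra. }
  set (q := margin w). assert (Hq := margin_pos w). destruct (margin_small w ltac:(lra)) as [Hq1 Hqa].
  destruct (Hlow w ltac:(lra)) as [LT [LI LV]].
  destruct (Hbound w ltac:(lra)) as [BT [BI BV]].
  apply Rabs_le_between in BT. apply Rabs_le_between in BI. apply Rabs_le_between in BV.
  destruct (solution_derive w ltac:(lra)) as [DT [DI DV]].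
  unfold perturbed_min in Hw0. rewrite !clamp_eq in Hw0 by lra.
  destruct (Rmin3_eq_0 _ _ _ Hw0) as [Hhit|[Hhit|Hhit]].
  - apply (first_touch_impossible T _ w ltac:(lra) DT); [|exact Hhit|apply Hbefore'].
    replace (T w) with (- q) by (unfold q; lra).
    apply rhs_T_escape; try assumption; lra.
  - apply (first_touch_impossible I _ w ltac:(lra) DI); [|exact Hhit|apply Hbefore'].
    replace (I w) with (- q) by (unfold q; lra).
    apply rhs_I_escape; try assumption.
    apply delayed_infection_ge; [lra|exact Hlow].
  - apply (first_touch_impossible V _ w ltac:(lra) DV); [|exact Hhit|apply Hbefore'].
    replace (V w) with (- q) by (unfold q; lra).
    apply rhs_V_escape; lra.
Qed.

Lemma ge_neg_margin t : z <= t <= z + eta ->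
  - margin t <= T t /\ - margin t <= I t /\ - margin t <= V t.
Proof.
  intros Ht. apply ge_margin_of_perturbed_min; [lra|]. left. apply perturbed_min_pos. exact Ht.
Qed.

End Continuation.

Lemma solution_locally_bounded z : -tau <= z -> exists eta M, 0 < eta /\ 1 <= M /\
  forall t, z <= t <= z + eta -> Rabs (T t) <= M /\ Rabs (I t) <= M /\ Rabs (V t) <= M.
Proof.
  intros Hz. destruct (solution_continuous z) as [CT [CI CV]].
  destruct (continuous_locally_bounded _ z CT) as [d1 [Hd1 B1]].
  destruct (continuous_locally_bounded _ z CI) as [d2 [Hd2 B2]].
  destruct (continuous_locally_bounded _ z CV) as [d3 [Hd3 B3]].
  rewrite clamp_eq in B1, B2, B3 by exact Hz.
  set (eta := Rmin (Rmin d1 d2) d3 / 2).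
  destruct (Rmin3_le d1 d2 d3) as [Hm1 [Hm2 Hm3]].
  assert (0 < Rmin (Rmin d1 d2) d3) by (apply Rmin_glb_lt; [apply Rmin_glb_lt|]; lra).
  exists eta, (1 + Rabs (T z) + Rabs (I z) + Rabs (V z)).
  generalize (Rabs_pos (T z)) (Rabs_pos (I z)) (Rabs_pos (V z)). intros HTz HIz HVz.
  split; [unfold eta; lra|split; [lra|]].
  intros t Ht. assert (Htz : Rabs (t - z) <= eta) by (rewrite Rabs_right; lra).
  specialize (B1 t ltac:(unfold eta in *; lra)). specialize (B2 t ltac:(unfold eta in *; lra)).
  specialize (B3 t ltac:(unfold eta in *; lra)).
  rewrite clamp_eq in B1, B2, B3 by lra. lra.
Qed.

Lemma nonneg_continuation z : 0 <= z -> (forall u, -tau <= u <= z -> nonneg_at u) ->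
  exists eta, 0 < eta /\ forall t, z <= t <= z + eta -> nonneg_at t.
Proof.
  intros Hz Hpast.
  destruct (solution_locally_bounded z ltac:(lra)) as [eta [M [Heta [HM Hbound]]]].
  exists eta. split; [exact Heta|]. intros t Ht.
  set (K := exp (escape_rate M * eta)).
  assert (HK : 0 < K) by apply exp_pos.
  set (r := Rmin 1 (1 / (2 * alpha)) / K).
  assert (Hr : 0 < r)
    by (apply Rdiv_lt_0_compat; [apply Rmin_glb_lt; [lra|apply Rdiv_lt_0_compat]|]; lra).
  assert (Hsmall : forall eps, 0 < eps < r -> eps * K <= 1 /\ alpha * (eps * K) <= 1 / 2).
  { intros eps [He He']. apply (Rmult_lt_compat_r K) in He'; [|exact HK].
    replace (r * K) with (Rmin 1 (1 / (2 * alpha))) in He' by (unfold r; field; lra).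
    generalize (Rmin_l 1 (1 / (2 * alpha))) (Rmin_r 1 (1 / (2 * alpha))). intros Hm1 Hm2.
    split; [lra|].
    apply Rmult_le_reg_r with (/ alpha); [apply Rinv_0_lt_compat; exact Halpha|].
    replace (alpha * (eps * K) * / alpha) with (eps * K) by (field; lra).
    replace (1 / 2 * / alpha) with (1 / (2 * alpha)) by (field; lra). lra. }
  assert (Hmargin : forall eps, 0 < eps < r ->
    - (eps * exp (escape_rate M * (t - z))) <= T t /\
    - (eps * exp (escape_rate M * (t - z))) <= I t /\
    - (eps * exp (escape_rate M * (t - z))) <= V t).
  { intros eps Heps. destruct (Hsmall eps Heps) as [H1 H2].
    exact (ge_neg_margin z eta M eps Hz HM Hpast Hbound ltac:(lra) H1 H2 t Ht). }
  split; [|split]; apply (ge0_of_ge_small _ (exp (escape_rate M * (t - z))) _ Hr);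
    intros eps Heps; apply (Hmargin eps Heps).
Qed.

Lemma nonneg_at_init t : -tau <= t <= 0 -> nonneg_at t.
Proof. intros Ht. destruct Hsol as [_ [_ [_ [Hinit _]]]]. exact (Hinit t Ht). Qed.

Lemma solution_nonneg t : -tau <= t -> nonneg_at t.
Proof.
  apply (continuous_induction nonneg_at (- tau) 0); [lra|exact nonneg_at_init| |].
  - intros z Hz Hbefore. destruct (solution_continuous z) as [CT [CI CV]].
    assert (Hleft : forall f : R -> R, continuous (clamp f) z ->
      (forall u, -tau <= u < z -> 0 <= f u) -> 0 <= f z).
    { intros f Hf Hf0. rewrite <- (clamp_eq f z) by lra.
      apply (continuous_nonneg_left _ z z Hf Hz). intros u Hu.
      rewrite clamp_eq by lra. apply Hf0. lra. }
    split; [|split]; apply Hleft; try assumption; intros u Hu; apply Hbefore; exact Hu.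
  - intros z Hz Hupto. apply nonneg_continuation; assumption.
Qed.

Lemma T_pos t : 0 < t -> 0 < T t.
Proof.
  intros Ht. destruct (solution_nonneg t ltac:(lra)) as [[HT|HT] [HI HV]]; [exact HT|exfalso].
  destruct (solution_derive t Ht) as [DT _].
  assert (Hd' : 0 < rhs_T (T t) (I t) (V t))
    by (unfold rhs_T, infection; rewrite <- HT; unfold Rdiv; ring_simplify; lra).
  destruct (is_derive_pos_left T t _ DT Hd' t Ht) as [u [Hu Hlt]].
  destruct (solution_nonneg u ltac:(lra)) as [Hu0 _]. lra.
Qed.

(** * The Lyapunov functional *)

Definition flux u := infection (clamp T u) (clamp V u).

Lemma flux_eq u : -tau <= u -> flux u = infection (T u) (V u).
Proof. intros Hu. unfold flux. rewrite !clamp_eq by exact Hu. reflexivity. Qed.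

Lemma flux_ge0 u : 0 <= flux u.
Proof.
  destruct (solution_nonneg (Rmax u (- tau)) (Rmax_r _ _)) as [HT [_ HV]].
  apply infection_ge0; assumption.
Qed.

Lemma flux_continuous x : continuous flux x.
Proof.
  destruct (solution_continuous x) as [CT [_ CV]].
  destruct (solution_nonneg (Rmax x (- tau)) (Rmax_r _ _)) as [_ [_ HV]].
  unfold flux, infection.
  apply (continuous_mult (fun y => b * clamp T y * clamp V y) (fun y => / (1 + alpha * clamp V y))).
  - apply (continuous_mult (fun y => b * clamp T y) (clamp V)); [|exact CV].
    apply (continuous_mult (fun _ => b) (clamp T)); [apply continuous_const|exact CT].
  - apply continuous_Rinv_comp; [|unfold clamp; nra].
    apply (continuous_plus (fun _ => 1) (fun y => alpha * clamp V y)); [apply continuous_const|].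
    apply (continuous_mult (fun _ => alpha) (clamp V)); [apply continuous_const|exact CV].
Qed.

Lemma ex_RInt_flux x y : ex_RInt flux x y.
Proof. apply (@ex_RInt_continuous R_CompleteNormedModule). intros; apply flux_continuous. Qed.

Definition delay_integral t := RInt flux (t - tau) t.

Lemma delay_integral_ge0 t : 0 <= delay_integral t.
Proof. apply RInt_ge_0; [lra|apply ex_RInt_flux|intros; apply flux_ge0]. Qed.

Lemma delay_integral_derive t : is_derive delay_integral t (flux t - flux (t - tau)).
Proof.
  assert (Hprim : forall x, is_derive (fun y => RInt flux 0 y) x (flux x)).
  { intros x. apply (is_derive_RInt flux _ 0 x); [|apply flux_continuous].
    exists (mkposreal 1 Rlt_0_1). intros y _. apply (@RInt_correct R_CompleteNormedModule).
    apply ex_RInt_flux. }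
  apply (is_derive_ext (fun y => RInt flux 0 y - RInt flux 0 (y - tau))).
  { intros y. unfold delay_integral.
    rewrite <- (RInt_Chasles flux (y - tau) 0 y) by apply ex_RInt_flux.
    rewrite <- (opp_RInt_swap flux 0 (y - tau)) by apply ex_RInt_flux.
    change (RInt flux 0 y - RInt flux 0 (y - tau) = - RInt flux 0 (y - tau) + RInt flux 0 y).
    ring. }
  apply (is_derive_minus (fun y => RInt flux 0 y) (fun y => RInt flux 0 (y - tau))); [apply Hprim|].
  assert (Hshift : is_derive (fun y => y - tau) t 1) by (auto_derive; [trivial|ring]).
  replace (flux (t - tau)) with (scal 1 (flux (t - tau)));
    [exact (is_derive_comp _ _ t _ _ (Hprim (t - tau)) Hshift)|].
  unfold scal; simpl; unfold mult; simpl. ring.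
Qed.

Definition lyapunov t :=
  volterra Tz (clamp T t) + clamp I t + kV * clamp V t + delay_integral t.

Definition lyapunov_rate t :=
  rhs_T (T t) (I t) (V t) - Tz * (rhs_T (T t) (I t) (V t) / T t)
  + rhs_I (T (t - tau)) (V (t - tau)) (T t) (I t) + kV * rhs_V (I t) (V t)
  + (flux t - flux (t - tau)).

Lemma lyapunov_eq t : -tau <= t ->
  lyapunov t = volterra Tz (T t) + I t + kV * V t + delay_integral t.
Proof. intros Ht. unfold lyapunov. rewrite !clamp_eq by exact Ht. reflexivity. Qed.

Lemma lyapunov_ge t : -tau <= t -> volterra Tz (T t) + I t + kV * V t <= lyapunov t.
Proof. intros Ht. rewrite lyapunov_eq by exact Ht. generalize (delay_integral_ge0 t). lra. Qed.

Lemma lyapunov_derive t : 0 < t -> is_derive lyapunov t (lyapunov_rate t).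
Proof.
  intros Ht. destruct (solution_derive t Ht) as [DT [DI DV]].
  assert (HT := T_pos t Ht). assert (HT0 := T0_pos).
  apply (is_derive_ext_loc (fun t => volterra Tz (T t) + I t + kV * V t + delay_integral t)).
  { exists (mkposreal (t + tau) ltac:(lra)). intros y Hy.
    change (Rabs (y - t) < t + tau) in Hy. apply Rabs_def2 in Hy.
    symmetry. apply lyapunov_eq. lra. }
  assert (DL : is_derive (fun t => ln (T t / Tz)) t (rhs_T (T t) (I t) (V t) / T t)).
  { assert (H1 : is_derive (fun t => T t / Tz) t (rhs_T (T t) (I t) (V t) / Tz)).
    { apply (is_derive_ext (fun t => / Tz * T t)); [intros u; unfold Rdiv; apply Rmult_comm|].
      replace (rhs_T (T t) (I t) (V t) / Tz) with (/ Tz * rhs_T (T t) (I t) (V t))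
        by (unfold Rdiv; ring).
      apply is_derive_scal. exact DT. }
    replace (rhs_T (T t) (I t) (V t) / T t)
      with (scal (rhs_T (T t) (I t) (V t) / Tz) (/ (T t / Tz)))
      by (unfold scal; simpl; unfold mult; simpl; field; lra).
    apply (is_derive_comp ln (fun t => T t / Tz) t); [|exact H1].
    apply is_derive_ln. apply Rdiv_lt_0_compat; lra. }
  unfold lyapunov_rate, volterra.
  apply (is_derive_plus (fun t => T t - Tz - Tz * ln (T t / Tz) + I t + kV * V t) delay_integral);
    [|apply delay_integral_derive].
  apply (is_derive_plus (fun t => T t - Tz - Tz * ln (T t / Tz) + I t) (fun t => kV * V t));
    [|apply is_derive_scal; exact DV].
  apply (is_derive_plus (fun t => T t - Tz - Tz * ln (T t / Tz)) I); [|exact DI].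
  replace (rhs_T (T t) (I t) (V t) - Tz * (rhs_T (T t) (I t) (V t) / T t))
    with (minus (minus (rhs_T (T t) (I t) (V t)) 0) (Tz * (rhs_T (T t) (I t) (V t) / T t)))
    by (unfold minus, plus, opp; simpl; ring).
  apply (is_derive_minus (fun t => T t - Tz) (fun t => Tz * ln (T t / Tz))).
  - apply (is_derive_minus T (fun _ => Tz)); [exact DT|].
    apply (@is_derive_const R_AbsRing R_NormedModule Tz t).
  - apply is_derive_scal. exact DL.
Qed.

Hypothesis HR0 : R0_number s d a Tmax b mu p c <= 1.

Lemma lyapunov_rate_le t : 0 <= t -> 0 < T t ->
  lyapunov_rate t <= - dissipation (T t) (I t) (V t).
Proof.
  intros Ht HT.
  destruct (solution_nonneg t ltac:(lra)) as [_ [HI HV]].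
  destruct (solution_nonneg (t - tau) ltac:(lra)) as [_ [_ HVd]].
  unfold lyapunov_rate. rewrite !flux_eq by lra.
  apply lyapunov_rhs_le; assumption.
Qed.

Lemma lyapunov_rate_nonpos t : 0 <= t -> 0 < T t -> lyapunov_rate t <= 0.
Proof.
  intros Ht HT. destruct (solution_nonneg t ltac:(lra)) as [_ [_ HV]].
  destruct (dissipation_terms_ge0 (T t) (I t) (V t) HT HV) as [D1 [D2 D3]].
  generalize (lyapunov_rate_le t Ht HT). unfold dissipation. lra.
Qed.

Lemma lyapunov_continuous t : 0 < clamp T t -> continuous lyapunov t.
Proof.
  intros HT. assert (HT0 := T0_pos).
  destruct (solution_continuous t) as [CT [CI CV]].
  unfold lyapunov, volterra.
  apply (continuous_plus _ delay_integral);
    [|apply (ex_derive_continuous delay_integral); eexists; apply delay_integral_derive].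
  apply (continuous_plus _ (fun t => kV * clamp V t));
    [|apply (continuous_mult (fun _ => kV)); [apply continuous_const|exact CV]].
  apply (continuous_plus _ (clamp I)); [|exact CI].
  apply (continuous_minus (fun t => clamp T t - Tz) (fun t => Tz * ln (clamp T t / Tz))).
  - apply (continuous_minus (clamp T) (fun _ => Tz)); [exact CT|apply continuous_const].
  - apply (continuous_mult (fun _ => Tz)); [apply continuous_const|].
    apply (continuous_comp (fun t => clamp T t / Tz) ln).
    + apply (continuous_mult (clamp T) (fun _ => / Tz)); [exact CT|apply continuous_const].
    + apply (ex_derive_continuous ln). eexists. apply is_derive_ln.
      apply Rdiv_lt_0_compat; lra.
Qed.

Lemma lyapunov_nonincreasing x y : 0 <= x -> 0 < T x -> x <= y -> lyapunov y <= lyapunov x.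
Proof.
  intros Hx HTx [Hxy|<-]; [|lra].
  assert (Hpos : forall u, x <= u <= y -> 0 < T u).
  { intros u [[Hu|<-] _]; [apply T_pos; lra|exact HTx]. }
  destruct (mean_value lyapunov lyapunov_rate x y Hxy) as [c0 [Hc0 Heq]].
  - intros u Hu. apply lyapunov_derive. lra.
  - intros u Hu. apply lyapunov_continuous. rewrite clamp_eq by lra. apply Hpos. exact Hu.
  - assert (lyapunov_rate c0 <= 0) by (apply lyapunov_rate_nonpos; [lra|apply Hpos; exact Hc0]).
    nra.
Qed.

Lemma solution_bounded : exists M, 0 < M /\ forall t, 1 + tau < t ->
  0 < T t <= M /\ 0 <= I t <= M /\ 0 <= V t <= M /\ 0 <= T (t - tau) <= M /\ 0 <= V (t - tau) <= M.
Proof.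
  assert (HT0 := T0_pos). assert (HkV : 0 < kV) by (apply Rdiv_lt_0_compat; nra).
  set (L1 := lyapunov 1).
  assert (Hbox : forall t, 1 <= t ->
    0 < T t <= 2 * (L1 + Tz) /\ 0 <= I t <= L1 /\ 0 <= V t <= L1 / kV).
  { intros t Ht. assert (HTt := T_pos t ltac:(lra)).
    destruct (solution_nonneg t ltac:(lra)) as [_ [HI HV]].
    assert (Hdecr := lyapunov_nonincreasing 1 t ltac:(lra) (T_pos 1 ltac:(lra)) Ht).
    assert (Hge := lyapunov_ge t ltac:(lra)).
    assert (Hg0 := volterra_ge0 Tz HT0 (T t) HTt).
    assert (Hg1 := volterra_ge_half Tz HT0 (T t) HTt).
    assert (0 <= kV * V t) by nra. fold L1 in Hdecr.
    assert (V t <= L1 / kV).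
    { apply (Rmult_le_reg_l kV); [exact HkV|].
      replace (kV * (L1 / kV)) with L1 by (field; lra). lra. }
    repeat split; lra. }
  destruct (Hbox 1 ltac:(lra)) as [_ [HI1 _]].
  assert (0 <= L1 / kV) by (apply Rdiv_le_0_compat; lra).
  exists (2 * (L1 + Tz) + L1 + L1 / kV + 1). split; [lra|].
  intros t Ht.
  destruct (Hbox t ltac:(lra)) as [B1 [B2 B3]].
  destruct (Hbox (t - tau) ltac:(lra)) as [B4 [_ B5]].
  repeat split; lra.
Qed.

Lemma tends_to_0_of_dissipation (h dh : R -> R) cc K t2 : 0 < cc -> 0 < K -> 0 <= t2 ->
  (forall t, t2 < t -> is_derive h t (dh t)) -> (forall t, t2 < t -> Rabs (dh t) <= K) ->
  (forall t, t2 < t -> cc * (h t) ^ 2 <= dissipation (T t) (I t) (V t)) ->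
  is_lim h p_infty 0.
Proof.
  intros Hcc HK Ht2 Hh' Hdh Hdiss. assert (HT0 := T0_pos).
  apply (barbalat lyapunov lyapunov_rate h dh t2 cc K); try assumption.
  - intros t Ht. apply lyapunov_derive. lra.
  - intros t Ht. specialize (Hdiss t Ht).
    generalize (lyapunov_rate_le t ltac:(lra) (T_pos t ltac:(lra))). lra.
  - intros t Ht. assert (HTt := T_pos t ltac:(lra)).
    destruct (solution_nonneg t ltac:(lra)) as [_ [HI HV]].
    assert (HkV : 0 <= kV * V t) by (apply Rmult_le_pos; [apply Rdiv_le_0_compat|]; nra).
    generalize (lyapunov_ge t ltac:(lra)) (volterra_ge0 Tz HT0 (T t) HTt). lra.
Qed.

Lemma solution_eventually_bounded : exists M, 0 < M /\ forall t, 1 + tau < t ->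
  0 < T t <= M /\ 0 <= V t <= M /\
  Rabs (rhs_T (T t) (I t) (V t)) <= bound_T M /\
  Rabs (rhs_I (T (t - tau)) (V (t - tau)) (T t) (I t)) <= bound_I M /\
  Rabs (rhs_V (I t) (V t)) <= bound_V M.
Proof.
  destruct solution_bounded as [M [HM Hbox]]. exists M. split; [exact HM|].
  intros t Ht. destruct (Hbox t Ht) as [[HT1 HT2] [HI [HV [HTd HVd]]]].
  split; [lra|split; [exact HV|]]. apply rhs_bounds; try assumption; lra.
Qed.

Lemma T_minus_T0_tends_0 : is_lim (fun t => T t - Tz) p_infty 0.
Proof.
  assert (HT0 := T0_pos).
  destruct solution_eventually_bounded as [M [HM Hbox]].
  destruct (bounds_pos M HM) as [HKT _].
  apply (tends_to_0_of_dissipation _ (fun t => rhs_T (T t) (I t) (V t))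
    (s / (M * Tz)) (bound_T M) (1 + tau)); [apply Rdiv_lt_0_compat; nra|lra|lra| | |].
  - intros t Ht. apply is_derive_minus_const. apply solution_derive. lra.
  - intros t Ht. apply Hbox. exact Ht.
  - intros t Ht. destruct (Hbox t Ht) as [[HT1 HT2] [[HV _] _]].
    destruct (dissipation_terms_ge0 (T t) (I t) (V t) HT1 HV) as [_ [D2 D3]].
    assert (s / (M * Tz) * (T t - Tz) ^ 2 <= s / (T t * Tz) * (T t - Tz) ^ 2).
    { apply Rmult_le_compat_r; [apply pow2_ge_0|]. unfold Rdiv.
      apply Rmult_le_compat_l; [lra|]. apply Rinv_le_contravar; [nra|].
      apply Rmult_le_compat_r; lra. }
    unfold dissipation. lra.
Qed.

Lemma T_plus_I_minus_T0_tends_0 : is_lim (fun t => T t + I t - Tz) p_infty 0.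
Proof.
  destruct solution_eventually_bounded as [M [HM Hbox]].
  destruct (bounds_pos M HM) as [HKT [HKI _]].
  apply (tends_to_0_of_dissipation _ (fun t => rhs_T (T t) (I t) (V t)
    + rhs_I (T (t - tau)) (V (t - tau)) (T t) (I t))
    (a / Tmax) (bound_T M + bound_I M) (1 + tau)); [apply Rdiv_lt_0_compat; lra|lra|lra| | |].
  - intros t Ht. apply is_derive_minus_const.
    destruct (solution_derive t ltac:(lra)) as [DT [DI _]].
    apply (is_derive_plus T I); assumption.
  - intros t Ht. destruct (Hbox t Ht) as [_ [_ [R1 [R2 _]]]].
    apply Rle_trans with (1 := Rabs_triang _ _). lra.
  - intros t Ht. destruct (Hbox t Ht) as [[HT1 _] [[HV _] _]].
    destruct (dissipation_terms_ge0 (T t) (I t) (V t) HT1 HV) as [D1 [_ D3]].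
    unfold dissipation. lra.
Qed.

Lemma V_tends_0 : is_lim V p_infty 0.
Proof.
  assert (HT0 := T0_pos).
  destruct solution_eventually_bounded as [M [HM Hbox]].
  destruct (bounds_pos M HM) as [_ [_ HKV]].
  apply (tends_to_0_of_dissipation _ (fun t => rhs_V (I t) (V t))
    (b * Tz * alpha / (1 + alpha * M)) (bound_V M) (1 + tau));
    [apply Rdiv_lt_0_compat; [apply Rmult_lt_0_compat; [apply Rmult_lt_0_compat|]|]; nra
    |lra|lra| | |].
  - intros t Ht. apply solution_derive. lra.
  - intros t Ht. apply Hbox. exact Ht.
  - intros t Ht. destruct (Hbox t Ht) as [[HT1 _] [[HV1 HV2] _]].
    destruct (dissipation_terms_ge0 (T t) (I t) (V t) HT1 HV1) as [D1 [D2 _]].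
    assert (b * Tz * alpha / (1 + alpha * M) * V t ^ 2
            <= b * Tz * alpha * V t ^ 2 / (1 + alpha * V t)).
    { unfold Rdiv. rewrite Rmult_assoc, (Rmult_comm (/ (1 + alpha * M))), <- Rmult_assoc.
      apply Rmult_le_compat_l;
        [apply Rmult_le_pos; [apply Rmult_le_pos; [apply Rmult_le_pos|]|apply pow2_ge_0]; lra|].
      apply Rinv_le_contravar; [nra|]. apply Rplus_le_compat_l, Rmult_le_compat_l; lra. }
    unfold dissipation. lra.
Qed.

Lemma solution_attractive : is_lim T p_infty Tz /\ is_lim I p_infty 0 /\ is_lim V p_infty 0.
Proof.
  split; [|split; [|exact V_tends_0]].
  - apply (is_lim_ext (fun t => (T t - Tz) + Tz)); [intros; ring|].
    replace (Finite Tz) with (Finite (0 + Tz)) by (f_equal; ring).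
    apply is_lim_plus'; [exact T_minus_T0_tends_0|apply is_lim_const].
  - apply (is_lim_ext (fun t => (T t + I t - Tz) - (T t - Tz))); [intros; ring|].
    replace (Finite 0) with (Finite (0 - 0)) by (f_equal; ring).
    apply is_lim_minus'; [exact T_plus_I_minus_T0_tends_0|exact T_minus_T0_tends_0].
Qed.

Lemma delay_integral_0_le del : init_close tau del Tz 0 0 T I V ->
  delay_integral 0 <= tau * (b * (Tz + del) * del).
Proof.
  intros Hclose. unfold delay_integral. replace (0 - tau) with (- tau) by ring.
  apply Rle_trans with (RInt (fun _ => b * (Tz + del) * del) (- tau) 0).
  - apply RInt_le; [lra|apply ex_RInt_flux|apply ex_RInt_const|].
    intros x Hx. rewrite flux_eq by lra.
    destruct (Hclose x ltac:(lra)) as [H1 [_ H3]].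
    destruct (nonneg_at_init x ltac:(lra)) as [N1 [_ N3]].
    apply Rabs_def2 in H1. apply Rabs_def2 in H3. rewrite Rminus_0_r in H3.
    apply Rle_trans with (b * T x * V x); [apply infection_le_mass; lra|].
    rewrite !Rmult_assoc. apply Rmult_le_compat_l; [lra|]. apply Rmult_le_compat; lra.
  - rewrite RInt_const. unfold scal; simpl; unfold mult; simpl. lra.
Qed.

Lemma lyapunov_0_le del : 0 < del <= 1 -> del <= Tz / 2 -> init_close tau del Tz 0 0 T I V ->
  lyapunov 0 <= del * (2 + kV + tau * b * (Tz + 1)).
Proof.
  intros Hdel Hdel2 Hclose. assert (HT0 := T0_pos).
  assert (HkV : 0 < kV) by (apply Rdiv_lt_0_compat; nra).
  destruct (Hclose 0 ltac:(lra)) as [H1 [H2 H3]]. rewrite Rminus_0_r in H2, H3.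
  destruct (nonneg_at_init 0 ltac:(lra)) as [_ [N2 N3]].
  rewrite Rabs_right in H2, H3 by lra.
  apply Rabs_def2 in H1.
  assert (HT0' : Tz / 2 <= T 0) by lra.
  assert (Hg : volterra Tz (T 0) <= del).
  { apply Rle_trans with ((T 0 - Tz) ^ 2 / T 0); [apply volterra_le_sqr; lra|].
    apply Rle_trans with (del ^ 2 / (Tz / 2)).
    - unfold Rdiv. apply Rmult_le_compat;
        [apply pow2_ge_0|left; apply Rinv_0_lt_compat; lra|nra|apply Rinv_le_contravar; lra].
    - apply (Rmult_le_reg_r (Tz / 2)); [lra|].
      unfold Rdiv. rewrite Rmult_assoc, Rinv_l by lra. nra. }
  assert (HJ := delay_integral_0_le del Hclose).
  assert (kV * V 0 <= kV * del) by (apply Rmult_le_compat_l; lra).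
  assert (tau * (b * (Tz + del) * del) <= del * (tau * b * (Tz + 1))).
  { replace (tau * (b * (Tz + del) * del)) with (del * (tau * b * (Tz + del))) by ring.
    apply Rmult_le_compat_l; [lra|]. apply Rmult_le_compat_l; [apply Rmult_le_pos|]; lra. }
  rewrite lyapunov_eq by lra. lra.
Qed.

Lemma solution_energy_le del : 0 < del <= 1 -> del <= Tz / 2 ->
  init_close tau del Tz 0 0 T I V -> forall t, 0 <= t ->
  volterra Tz (T t) + I t + kV * V t <= del * (2 + kV + tau * b * (Tz + 1)) /\
  0 < T t /\ 0 <= I t /\ 0 <= V t.
Proof.
  intros Hdel Hdel2 Hclose t Ht. assert (HT0 := T0_pos).
  assert (HTi : 0 < T 0).
  { destruct (Hclose 0 ltac:(lra)) as [H1 _]. apply Rabs_def2 in H1. lra. }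
  assert (HTt : 0 < T t) by (destruct Ht as [Ht|<-]; [apply T_pos; exact Ht|exact HTi]).
  destruct (solution_nonneg t ltac:(lra)) as [_ [HI HV]].
  repeat split; try assumption.
  apply Rle_trans with (lyapunov t); [apply lyapunov_ge; lra|].
  apply Rle_trans with (lyapunov 0); [apply lyapunov_nonincreasing; [lra|exact HTi|exact Ht]|].
  apply lyapunov_0_le; assumption.
Qed.

End Solution.

Lemma solution_stable eps : R0_number s d a Tmax b mu p c <= 1 -> 0 < eps ->
  exists delta, 0 < delta /\
    forall T I V, is_solution s d a Tmax b alpha mu p c tau T I V ->
    init_close tau delta Tz 0 0 T I V -> forall t, 0 <= t ->
    Rabs (T t - Tz) < eps /\ Rabs (I t - 0) < eps /\ Rabs (V t - 0) < eps.
Proof.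
  intros HR0 Heps. assert (HT0 := T0_pos).
  assert (HkV : 0 < kV) by (apply Rdiv_lt_0_compat; nra).
  destruct (volterra_sublevel_small Tz HT0 kV eps HkV Heps) as [m [Hm Hsmall]].
  set (C := 2 + kV + tau * b * (Tz + 1)).
  assert (HC : 0 < C) by (unfold C; assert (0 <= tau * b * (Tz + 1)) by (apply Rmult_le_pos; nra); lra).
  set (delta := Rmin (Rmin 1 (Tz / 2)) (m / (2 * C))).
  assert (Hdelta : 0 < delta)
    by (apply Rmin_glb_lt; [apply Rmin_glb_lt|apply Rdiv_lt_0_compat]; lra).
  destruct (Rmin3_le 1 (Tz / 2) (m / (2 * C))) as [Hd1 [Hd2 Hd3]]. fold delta in Hd1, Hd2, Hd3.
  exists delta. split; [exact Hdelta|].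
  intros T I V Hsol Hclose t Ht.
  destruct (solution_energy_le T I V Hsol HR0 delta ltac:(lra) Hd2 Hclose t Ht)
    as [Henergy [HT [HI HV]]]. fold C in Henergy.
  assert (delta * C <= m / 2).
  { apply Rle_trans with (m / (2 * C) * C); [apply Rmult_le_compat_r; lra|].
    right. field. lra. }
  destruct (Hsmall (T t) (I t) (V t) HT HI HV ltac:(lra)) as [E1 [E2 E3]].
  split; [exact E1|]. rewrite !Rminus_0_r, !Rabs_right by lra. split; assumption.
Qed.

End Model.

Theorem theorem3 (s d a Tmax b alpha mu p c tau : R) :
  0 < s -> 0 < d -> 0 < a -> 0 < Tmax -> 0 < b -> 0 < alpha -> 0 < mu ->
  0 < p -> 0 < c -> 0 <= tau ->
  R0_number s d a Tmax b mu p c <= 1 ->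
  globally_asymptotically_stable s d a Tmax b alpha mu p c tau
    (T0 s d a Tmax) 0 0.
Proof.
  intros Hs Hd Ha HTmax Hb Halpha Hmu Hp Hc Htau HR0. split.
  - exact (fun eps => solution_stable s d a Tmax b alpha mu p c tau
      Hs Hd Ha HTmax Hb Halpha Hmu Hp Hc Htau eps HR0).
  - exact (fun T I V Hsol => solution_attractive s d a Tmax b alpha mu p c tau
      Hs Hd Ha HTmax Hb Halpha Hmu Hp Hc Htau T I V Hsol HR0).
Qed.
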